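(* Let $\Sigma=(I,X,\mathcal U,\phi,Y,h)$ be a forward complete control system with outputs. Then the following are equivalent: (1) $\Sigma$ is IOS and OL; (2) $\Sigma$ is OUAG, OL, and $h$ is $\mathcal K$-bounded; (3) $\Sigma$ is OULIM, OL, and $h$ is $\mathcal K$-bounded.
   Context: Let $I\in\{\mathbb N_0,\mathbb R_0^+\}$. A forward complete control system with outputs $\Sigma=(I,X,\mathcal U,\phi,Y,h)$ consists of: a normed space $(X,\|\cdot\|_X)$; a vector space $U$ and a normed linear subspace $(\mathcal U,\|\cdot\|_{\mathcal U})$ of $\{u:I\to U\}$ such that for all $u\in\mathcal U,\tau\in I$, $u(\cdot+\tau)\in\mathcal U$ with $\|u(\cdot+\tau)\|_{\mathcal U}\le\|u\|_{\mathcal U}$, and for $t_2\ge t_1\ge 0$ the function $u|_{[t_1,t_2]}$ ($u$ on $[t_1,t_2]$, $0$ elsewhere) lies in $\mathcal U$ with norm $\le\|u\|_{\mathcal U}$; a map $\phi:I\times X\times\mathcal U\to X$ with $\phi(0,x,u)=x$, causality (if $u,\tilde u$ agree on $[0,t]$ then $\phi(t,x,u)=\phi(t,x,\tilde u)$), and cocycle property $\phi(t+s,x,u)=\phi(s,\phi(t,x,u),u(t+\cdot))$; a normed space $Y$ and $h:X\times U\to Y$. Write $y(t,x,u)=h(\phi(t,x,u),u(t))$, $B_r=\{x:\|x\|_X<r\}$, $B_{r,\mathcal U}=\{u:\|u\|_{\mathcal U}<r\}$. $\mathcal K,\mathcal K_\infty,\mathcal{KL}$ are the standard comparison function classes. IOS: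 $\exists\beta\in\mathcal{KL},\gamma\in\mathcal K_\infty$ with $\|y(t,x,u)\|_Y\le\beta(\|x\|_X,t)+\gamma(\|u\|_{\mathcal U})$ for all $x\in X,u\in\mathcal U,t\in I$. OL: $\exists\sigma,\gamma\in\mathcal K_\infty$ with $\|y(t,x,u)\|_Y\le\sigma(\|y(0,x,u)\|_Y)+\gamma(\|u\|_{\mathcal U})$ for all $x,u,t$. OUAG: $\exists\gamma\in\mathcal K_\infty$ such that for all $\varepsilon,r,s>0$ there is $\tau\in I$ with $\|y(t,x,u)\|_Y\le\varepsilon+\gamma(\|u\|_{\mathcal U})$ for all $x\in B_r,u\in B_{s,\mathcal U},t\ge\tau$. OULIM: $\exists\gamma\in\mathcal K_\infty$ such that for all $\varepsilon,r,s>0$ there is $\tau\in I$ such that for all $x\in B_r,u\in B_{s,\mathcal U}$ there exists $t\in I$, $t\le\tau$, with $\|y(t,x,u)\|_Y\le\varepsilon+\gamma(\|u\|_{\mathcal U})$. $h$ is $\mathcal K$-bounded: there exist $\sigma_1,\gamma_1\in\mathcal K$ with $\|h(x,u(0))\|_Y\le\sigma_1(\|x\|_X)+\gamma_1(\|u\|_{\mathcal U})$ for all $x\in X$, $u\in\mathcal U$. *)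

From HB Require Import structures.
From mathcomp Require Import all_boot all_order all_algebra.
From mathcomp Require Import all_classical all_reals all_analysis.
Set Implicit Arguments. Unset Strict Implicit. Unset Printing Implicit Defensive.
Import Order.TTheory GRing.Theory Num.Theory.
Import numFieldNormedType.Exports.
Local Open Scope classical_set_scope.
Local Open Scope ring_scope.

(** Time domain I : either N_0 (Discrete) or R_0^+ (Continuous),
    realised as a subtype of R. *)
Inductive timekind := Discrete | Continuous.

Definition timeset {R : realType} (k : timekind) (t : R) : bool :=
  match k with Discrete => t \is a Num.nat | Continuous => 0 <= t end.

Definition time (R : realType) (k : timekind) := {t : R | timeset k t}.

Lemma timeset0 (R : realType) k : timeset k (0 : R).
Proof. by case: k => //=; rewrite rpred0. Qed.

Lemma timesetD (R : realType) k (s t : R) :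
  timeset k s -> timeset k t -> timeset k (s + t).
Proof. by case: k => /= hs ht; [exact: rpredD | exact: addr_ge0]. Qed.

Definition tzero (R : realType) k : time R k := exist _ 0 (timeset0 R k).
Definition tadd (R : realType) k (s t : time R k) : time R k :=
  exist _ (sval s + sval t) (timesetD (svalP s) (svalP t)).

(** Comparison functions (on R_0^+, functions R -> R whose values off
    [0,+oo) are irrelevant). *)
Definition classK (R : realType) (g : R -> R) : Prop :=
  {within [set x : R | 0 <= x], continuous g} /\ g 0 = 0 /\
  (forall x y : R, 0 <= x -> x < y -> g x < g y).

Definition classKinf (R : realType) (g : R -> R) : Prop :=
  classK g /\ (forall M : R, exists r : R, 0 <= r /\ M < g r).

Definition classKL (R : realType) (b : R -> R -> R) : Prop :=
  {within [set p : R * R | 0 <= p.1 /\ 0 <= p.2], continuous (fun p => b p.1 p.2)} /\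
  (forall t : R, 0 <= t -> classK (fun r => b r t)) /\
  (forall r : R, 0 < r ->
     (forall t1 t2 : R, 0 <= t1 -> t1 < t2 -> b r t2 < b r t1) /\
     (b r t @[t --> +oo] --> 0)).

(** Forward complete control system with outputs
    Sigma = (I, X, Uc, phi, Y, h). The input space Uc is a normed linear
    subspace [Uset] (with norm [unorm]) of the functions I -> U. *)
Record ctrl_sys (R : realType) (k : timekind) (X : normedModType R)
    (U : lmodType R) (Y : normedModType R) := CtrlSys {
  Uset : set (time R k -> U);
  unorm : (time R k -> U) -> R;
  phi : time R k -> X -> (time R k -> U) -> X;
  h : X -> U -> Y;
  Uset0 : Uset (fun _ => 0);
  UsetD : forall u v, Uset u -> Uset v -> Uset (fun t => u t + v t);
  UsetZ : forall (a : R) u, Uset u -> Uset (fun t => a *: u t);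
  unorm_ge0 : forall u, Uset u -> 0 <= unorm u;
  unorm_eq0 : forall u, Uset u -> unorm u = 0 -> u = (fun _ => 0);
  unorm0 : unorm (fun _ => 0) = 0;
  unormD : forall u v, Uset u -> Uset v ->
    unorm (fun t => u t + v t) <= unorm u + unorm v;
  unormZ : forall (a : R) u, Uset u -> unorm (fun t => a *: u t) = `|a| * unorm u;
  Uset_shift : forall u (tau : time R k), Uset u ->
    Uset (fun s => u (tadd s tau)) /\ unorm (fun s => u (tadd s tau)) <= unorm u;
  Uset_restr : forall u (t1 t2 : time R k), Uset u -> sval t1 <= sval t2 ->
    let w := fun s : time R k =>
      if (sval t1 <= sval s) && (sval s <= sval t2) then u s else 0 in
    Uset w /\ unorm w <= unorm u;
  phi_id : forall x u, Uset u -> phi (tzero R k) x u = x;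
  phi_causal : forall t x u v, Uset u -> Uset v ->
    (forall s : time R k, sval s <= sval t -> u s = v s) ->
    phi t x u = phi t x v;
  phi_cocycle : forall t s x u, Uset u ->
    phi (tadd t s) x u = phi s (phi t x u) (fun r => u (tadd t r))
}.

Section Props.
Variables (R : realType) (k : timekind) (X : normedModType R)
  (U : lmodType R) (Y : normedModType R) (S : ctrl_sys k X U Y).

Definition yout (t : time R k) (x : X) (u : time R k -> U) : Y :=
  h S (phi S t x u) (u t).

Definition IOS : Prop :=
  exists (beta : R -> R -> R) (gamma : R -> R), classKL beta /\ classKinf gamma /\
  forall x u (t : time R k), Uset S u ->
    `|yout t x u| <= beta `|x| (sval t) + gamma (unorm S u).

Definition OL : Prop :=
  exists sigma gamma : R -> R, classKinf sigma /\ classKinf gamma /\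
  forall x u (t : time R k), Uset S u ->
    `|yout t x u| <= sigma `|yout (tzero R k) x u| + gamma (unorm S u).

Definition OUAG : Prop :=
  exists gamma : R -> R, classKinf gamma /\
  forall eps r s : R, 0 < eps -> 0 < r -> 0 < s ->
  exists tau : time R k,
  forall x u (t : time R k), `|x| < r -> Uset S u -> unorm S u < s ->
    sval tau <= sval t -> `|yout t x u| <= eps + gamma (unorm S u).

Definition OULIM : Prop :=
  exists gamma : R -> R, classKinf gamma /\
  forall eps r s : R, 0 < eps -> 0 < r -> 0 < s ->
  exists tau : time R k,
  forall x u, `|x| < r -> Uset S u -> unorm S u < s ->
  exists t : time R k, sval t <= sval tau /\
    `|yout t x u| <= eps + gamma (unorm S u).

Definition h_Kbounded : Prop :=
  exists sigma1 gamma1 : R -> R, classK sigma1 /\ classK gamma1 /\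
  forall x u, Uset S u ->
    `|h S x (u (tzero R k))| <= sigma1 `|x| + gamma1 (unorm S u).

End Props.

(* IOS gives OUAG through the decay of beta, and beta (., 0) bounds h; OUAG
   trivially gives OULIM.  Restarting OL at the time where OULIM makes the
   output small (cocycle property, shift invariance of inputs) turns OULIM
   into OUAG.  OL and the K-bound on h bound the output uniformly by
   psi |x| + gamma0 |u|; after subtracting a K_infinity gain g |u| dominating
   this bound for large inputs, V := |y| - g |u| is bounded by psi |x| and
   decays uniformly on bounded sets of states.  If V <= alpha |x| / (n + 1)
   after time T_n, then V <= alpha |x| * omega t, where omega is continuous,
   strictly decreasing, vanishing at infinity and at least 1 / (n + 1) up to
   time T_(n+1). *)
From HB Require Import structures.
From mathcomp Require Import all_boot all_order all_algebra.
From mathcomp Require Import all_classical all_reals all_analysis.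
From mathcomp Require Import lra.
Set Implicit Arguments. Unset Strict Implicit. Unset Printing Implicit Defensive.
Import Order.TTheory GRing.Theory Num.Theory.
Import numFieldNormedType.Exports.
Local Open Scope classical_set_scope.
Local Open Scope ring_scope.

Section ComparisonFunctions.
Variable R : realType.
Implicit Types (f g : R -> R) (x y : R).

Lemma classK_ge0 g x : classK g -> 0 <= x -> 0 <= g x.
Proof.
move=> [_ [g0 gi]]; rewrite le_eqVlt => /predU1P[<-|x0]; first by rewrite g0.
by rewrite -g0 ltW // gi.
Qed.

Lemma classK_le g x y : classK g -> 0 <= x -> x <= y -> g x <= g y.
Proof.
by move=> [_ [_ gi]] x0; rewrite le_eqVlt => /predU1P[->//|xy]; rewrite ltW // gi.
Qed.

Lemma within_continuousP (A : set R) f :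
  {within A, continuous f} <-> forall x, A x -> forall e, 0 < e ->
    exists2 d, 0 < d & forall y, A y -> `|x - y| < d -> `|f x - f y| < e.
Proof.
rewrite subspace_continuousP; split=> [fc x Ax e e0 | fc x Ax].
  have /cvgrPdist_lt/(_ e e0)/nbhs_ballP[d d0 fd] := fc x Ax.
  by exists d => // y Ay xy; apply: fd; rewrite // -ball_normE.
apply/cvgrPdist_lt => e e0; have [d d0 fd] := fc x Ax e e0.
by apply/nbhs_ballP; exists d => // y; rewrite -ball_normE /= => xy Ay; exact: fd.
Qed.

Lemma classK_continuous g : continuous g -> g 0 = 0 ->
  (forall x y, 0 <= x -> x < y -> g x < g y) -> classK g.
Proof. by move=> gc g0 gi; split => //; exact: continuous_subspaceT. Qed.

Lemma classK_id : classK (@id R).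
Proof. by apply: classK_continuous => // x; exact: cvg_id. Qed.

Lemma classK_sqrt : classK (@Num.sqrt R).
Proof.
apply: classK_continuous; [exact: sqrt_continuous | exact: sqrtr0 |].
by move=> x y x0 xy; rewrite ltr_sqrt // (le_lt_trans x0 xy).
Qed.

Lemma classK_sqr : classK (fun x => x ^+ 2).
Proof.
apply: classK_continuous; [exact: exprn_continuous | by rewrite expr0n |].
by move=> x y x0 xy; rewrite ltr_pXn2r // nnegrE // ltW // (le_lt_trans x0 xy).
Qed.

Lemma classK_add f g : classK f -> classK g -> classK (fun x => f x + g x).
Proof.
move=> [fc [f0 fi]] [gc [g0 gi]]; split; last split.
- move/subspace_continuousP : fc => fc; move/subspace_continuousP : gc => gc.
  by apply/subspace_continuousP => x Ax; apply: cvgD; [exact: fc | exact: gc].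
- by rewrite f0 g0 addr0.
- by move=> x y x0 xy; rewrite ltrD ?fi ?gi.
Qed.

Lemma classK_scale c f : 0 < c -> classK f -> classK (fun x => c * f x).
Proof.
move=> c0 [fc [f0 fi]]; split; last split.
- move/subspace_continuousP : fc => fc.
  by apply/subspace_continuousP => x Ax; apply: cvgMr; exact: fc.
- by rewrite f0 mulr0.
- by move=> x y x0 xy; rewrite ltr_pM2l ?fi.
Qed.

Lemma classK_comp f g : classK f -> classK g -> classK (fun x => f (g x)).
Proof.
move=> Kf Kg; have [fc [f0 fi]] := Kf; have [gc [g0 gi]] := Kg.
split; last split.
- apply/within_continuousP => x /= x0 e e0.
  have [d1 d10 fd] := (within_continuousP _ _).1 fc (g x) (classK_ge0 Kg x0) e e0.
  have [d2 d20 gd] := (within_continuousP _ _).1 gc x x0 d1 d10.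
  by exists d2 => // y /= y0 xy; apply: fd; [exact: classK_ge0 | exact: gd].
- by rewrite g0 f0.
- by move=> x y x0 xy; rewrite fi ?gi ?classK_ge0.
Qed.

Lemma classK_add_le g x y : classK g -> 0 <= x -> 0 <= y ->
  g (x + y) <= g (2 * x) + g (2 * y).
Proof.
move=> Kg x0 y0; have gx := classK_ge0 Kg (_ : 0 <= 2 * x).
have gy := classK_ge0 Kg (_ : 0 <= 2 * y).
have xy0 : 0 <= x + y by rewrite addr_ge0.
have [xy|yx] := leP x y.
  by rewrite (le_trans (classK_le Kg xy0 (_ : _ <= 2 * y))) ?lerDr ?gx ?mulr_ge0 //; lra.
by rewrite (le_trans (classK_le Kg xy0 (_ : _ <= 2 * x))) ?lerDl ?gy ?mulr_ge0 //; lra.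
Qed.

Lemma classK_small g e : classK g -> 0 < e -> exists2 d, 0 < d & g d <= e.
Proof.
move=> Kg e0; have [gc [g0 _]] := Kg.
have [d d0 gd] := (within_continuousP _ _).1 gc 0 (lexx 0) e e0.
have d20 : 0 < d / 2 by rewrite divr_gt0.
have gd0 : 0 <= g (d / 2) by rewrite classK_ge0 // ltW.
exists (d / 2) => //; apply: ltW; have := gd (d / 2) (ltW d20).
rewrite g0 !sub0r !normrN !ger0_norm ?(ltW d20) //; apply; lra.
Qed.

Lemma classKinf_id : classKinf (@id R).
Proof.
split=> [|M]; first exact: classK_id.
by exists (`|M| + 1); split; [rewrite addr_ge0 | rewrite (le_lt_trans (ler_norm M)) ?ltrDl].
Qed.

Lemma classKinf_add f g : classK f -> classKinf g -> classKinf (fun x => f x + g x).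
Proof.
move=> Kf [Kg gu]; split=> [|M]; first exact: classK_add.
have [r [r0 Mr]] := gu M; exists r; split => //.
by rewrite (lt_le_trans Mr) // lerDr classK_ge0.
Qed.

End ComparisonFunctions.

Section Ramp.
Variable R : realType.
Implicit Types (a c t s : R).

Definition ramp a c t := Num.max 0 (Num.min c (a + c - t)).

Lemma ramp_ge0 a c t : 0 <= ramp a c t.
Proof. by rewrite le_max lexx. Qed.

Lemma ramp_le a c t : 0 <= c -> ramp a c t <= c.
Proof. by move=> c0; rewrite ge_max c0 ge_min lexx. Qed.

Lemma ramp_lipschitz a c t s : ramp a c t <= ramp a c s + `|t - s|.
Proof.
rewrite /ramp; have := ler_norm (t - s); have := ler_norm (s - t).
rewrite distrC => ts st.
case: (leP c (a + c - t)); case: (leP c (a + c - s)); case: (leP 0 c);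
  try case: (leP 0 (a + c - t)); try case: (leP 0 (a + c - s)); lra.
Qed.

Lemma ramp_nonincreasing a c t s : t <= s -> ramp a c s <= ramp a c t.
Proof.
rewrite /ramp => ts.
case: (leP c (a + c - t)); case: (leP c (a + c - s)); case: (leP 0 c);
  try case: (leP 0 (a + c - t)); try case: (leP 0 (a + c - s)); lra.
Qed.

Lemma ramp_before a c t : 0 <= c -> t <= a -> ramp a c t = c.
Proof.
by move=> c0 ta; rewrite /ramp (min_idPl _) ?(max_idPr _) //; lra.
Qed.

Lemma ramp_after a c t : a + c <= t -> ramp a c t = 0.
Proof. by move=> act; apply/max_idPl; rewrite ge_min; apply/orP; right; lra. Qed.

End Ramp.

Section Decay.
Variables (R : realType) (T : nat -> R).
Implicit Types (t s : R).

Let height n : R := n.+1%:R^-1.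

Let height_gt0 n : 0 < height n.
Proof. by rewrite invr_gt0 ltr0n. Qed.

Let height_le1 n : height n <= 1.
Proof. by rewrite invf_le1 ?ler1n ?ltr0n. Qed.

Definition envelope t : R := sup (range (fun n => ramp (T n.+1) (height n) t)).

Lemma envelope_has_ubound t : has_ubound (range (fun n => ramp (T n.+1) (height n) t)).
Proof. by exists 1 => _ [n _ <-]; exact: le_trans (ramp_le _ _ (ltW _)) (height_le1 n). Qed.

Lemma ramp_le_envelope n t : ramp (T n.+1) (height n) t <= envelope t.
Proof. by apply: ub_le_sup; [exact: envelope_has_ubound | exists n]. Qed.

Lemma envelope_le t c : (forall n, ramp (T n.+1) (height n) t <= c) -> envelope t <= c.
Proof.
move=> rc; apply: ge_sup => [|_ [n _ <-] //].
by exists (ramp (T 1) (height 0) t), 0%N.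
Qed.

Lemma envelope_ge0 t : 0 <= envelope t.
Proof. exact: le_trans (ramp_ge0 _ _ _) (ramp_le_envelope 0 t). Qed.

Lemma envelope_lipschitz t s : envelope t <= envelope s + `|t - s|.
Proof.
apply: envelope_le => n; apply: le_trans (ramp_lipschitz _ _ t s) _.
by rewrite lerD2r ramp_le_envelope.
Qed.

Lemma envelope_nonincreasing t s : t <= s -> envelope s <= envelope t.
Proof.
move=> ts; apply: envelope_le => n.
exact: le_trans (ramp_nonincreasing _ _ ts) (ramp_le_envelope n t).
Qed.

Lemma envelope_continuous : continuous envelope.
Proof.
move=> t; apply/cvgrPdist_lt => e e0; apply/nbhs_ballP; exists e => // s /=.
move=> ts; apply: le_lt_trans ts.
have := envelope_lipschitz t s; have := envelope_lipschitz s t.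
by rewrite distrC ler_norml; lra.
Qed.

Lemma envelope_eventually_le e : 0 < e -> \forall t \near +oo, envelope t <= e.
Proof.
move=> e0; have [N /ltW hN] : exists N, height N < e.
  by have [N] := ltr_add_invr e0; rewrite add0r; exists N.
pose M := \big[Num.max/0]_(n < N) (T n.+1 + height n).
near=> t; have Mt : M <= t by near: t; apply: nbhs_pinfty_ge; exact: num_real.
apply: envelope_le => n; have [nN|Nn] := ltnP n N.
  rewrite ramp_after ?(ltW e0) // (le_trans _ Mt) //.
  exact: (le_bigmax _ (fun n : 'I_N => T n.+1 + height n) (Ordinal nN)).
apply: le_trans (ramp_le _ _ (ltW (height_gt0 n))) (le_trans _ hN).
by rewrite lef_pV2 ?posrE ?ltr0n // ler_nat.
Unshelve. all: by end_near.
Qed.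

Lemma envelope_cvg0 : envelope t @[t --> +oo] --> 0.
Proof.
apply/cvgrPdist_le => e e0; near=> t.
rewrite sub0r normrN ger0_norm ?envelope_ge0 //.
by near: t; exact: envelope_eventually_le.
Unshelve. all: by end_near.
Qed.

Definition decay t : R := envelope t + (1 + `|t|)^-1.

Lemma decay_continuous : continuous decay.
Proof.
move=> t; apply: cvgD; first exact: envelope_continuous.
apply: cvgV; first by rewrite gt_eqF // ltr_pwDl.
by apply: cvgD; [exact: cvg_cst | exact: norm_continuous].
Qed.

Lemma decay_gt0 t : 0 < decay t.
Proof. by rewrite ltr_wpDl ?envelope_ge0 // invr_gt0 ltr_pwDl. Qed.

Lemma decay_decreasing t s : 0 <= t -> t < s -> decay s < decay t.
Proof.
move=> t0 ts; rewrite ler_ltD ?envelope_nonincreasing ?ltW //.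
rewrite !ger0_norm ?(le_trans t0 (ltW ts)) // ltf_pV2 ?posrE ?ltrD2l //.
all: by rewrite ltr_pwDl // (le_trans t0 (ltW ts)).
Qed.

Lemma decay_ge_height n t : t <= T n.+1 -> n.+1%:R^-1 <= decay t.
Proof.
move=> tT; rewrite /decay -[_^-1](ramp_before (ltW (height_gt0 n)) tT).
by rewrite ler_wpDr ?ramp_le_envelope // invr_ge0 ltW // ltr_pwDl.
Qed.

Lemma decay_cvg0 : decay t @[t --> +oo] --> 0.
Proof.
rewrite -[0]addr0; apply: cvgD; first exact: envelope_cvg0.
apply/gtr0_cvgV0; first by near=> t; rewrite ltr_pwDl.
apply/cvgryPge => A; near=> t.
have At : A <= t by near: t; apply: nbhs_pinfty_ge; exact: num_real.
exact: le_trans At (ler_wpDl ler01 (ler_norm t)).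
Unshelve. all: by end_near.
Qed.

Lemma classKL_mul_decay (alpha : R -> R) :
  classK alpha -> classKL (fun r t => alpha r * decay t).
Proof.
move=> Kalpha; have [ac [a0 ai]] := Kalpha; split; last split.
- apply/subspace_continuousP => p [p1 _]; apply: cvgM.
    apply/cvgrPdist_lt => e e0.
    have [d d0 ad] := (within_continuousP _ _).1 ac p.1 p1 e e0.
    have fst_cvg : (fun q : R * R => q.1) @ nbhs p --> p.1.
      exact: (@cvg_fst _ _ (nbhs p.1) (nbhs p.2) _).
    apply: filterS ((cvgrPdist_lt _ _).1 fst_cvg d d0) => q pq [q1 _].
    exact: ad.
  by apply: cvg_within_filter; apply: continuous_comp; [exact: cvg_snd | exact: decay_continuous].
- move=> t _; rewrite (_ : (fun r => _) = (fun r => decay t * alpha r)).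
    exact: classK_scale (decay_gt0 t) Kalpha.
  by apply: funext => r; rewrite mulrC.
- move=> r r0; split=> [t1 t2 t10 t12|].
    by rewrite ltr_pM2l ?decay_decreasing // -a0 ai.
  by rewrite -(mulr0 (alpha r)); apply: cvgMr; exact: decay_cvg0.
Qed.

End Decay.

Lemma le_sqrt_mul (R : realType) (v a c : R) : 0 <= a -> 0 <= c ->
  v <= a -> v <= c ^+ 2 -> v <= Num.sqrt a * c.
Proof.
move=> a0 c0; rewrite -{1}(sqr_sqrtr a0); have := sqrtr_ge0 a.
move: (Num.sqrt a) => q q0 vq vc; have [qc|cq] := leP q c; nra.
Qed.

Lemma le_sqrt_add_sqr (R : realType) (a : R) : 0 <= a -> a <= Num.sqrt a + a ^+ 2.
Proof.
move=> a0; rewrite -{1 3}(sqr_sqrtr a0); have := sqrtr_ge0 a.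
move: (Num.sqrt a) => q q0; have [q1|q1] := leP q 1; nra.
Qed.

Section UniformDecayKL.
Variables (R : realType) (A : Type) (D : set A) (V rho tau : A -> R) (sigma : R -> R).
Hypotheses (Ksigma : classK sigma) (rho_ge0 : forall a, 0 <= rho a)
  (tau_ge0 : forall a, D a -> 0 <= tau a)
  (V_le_sigma : forall a, D a -> V a <= sigma (rho a))
  (V_decay : forall e r, 0 < e -> 0 < r ->
     exists T, forall a, D a -> rho a < r -> T <= tau a -> V a <= e).

Let sigma1 r := sigma r + r.
Let alpha r := Num.sqrt (sigma1 r) + sigma1 r ^+ 2.

Let classK_sigma1 : classK sigma1.
Proof. exact: classK_add Ksigma (@classK_id R). Qed.

Let classK_alpha : classK alpha.
Proof. exact: classK_add (classK_comp (@classK_sqrt R) _) (classK_comp (@classK_sqr R) _). Qed.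

Let V_le_sigma1 a : D a -> V a <= sigma1 (rho a).
Proof. by move=> Da; rewrite (le_trans (V_le_sigma Da)) // /sigma1 lerDl rho_ge0. Qed.

Let V_le_alpha a : D a -> V a <= alpha (rho a).
Proof.
by move=> Da; rewrite (le_trans (V_le_sigma1 Da)) // le_sqrt_add_sqr // classK_ge0.
Qed.

Let V_le_alpha_height n : exists Tn, n%:R <= Tn /\
  forall a, D a -> Tn <= tau a -> V a <= alpha (rho a) * n.+1%:R^-1.
Proof.
have c0 : 0 < (n.+1%:R : R)^-1 by rewrite invr_gt0 ltr0n.
have [T decT] := V_decay (exprn_gt0 2 c0) (ltr0Sn R n).
exists (Num.max T n%:R); split=> [|a Da]; first by rewrite le_max lexx orbT.
rewrite ge_max => /andP[Ttau _].
have s0 := classK_ge0 classK_sigma1 (rho_ge0 a).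
(* Small states: V <= min (sigma1, c^2) <= sqrt sigma1 * c.  Large states:
   c * sigma1 >= 1, so V <= sigma1 <= sigma1^2 * c. *)
have [rn|nr] := ltP (rho a) n.+1%:R.
  apply: le_trans (le_sqrt_mul s0 (ltW c0) (V_le_sigma1 Da) (decT a Da rn Ttau)) _.
  by rewrite ler_pM2r // /alpha lerDl sqr_ge0.
have ns : n.+1%:R <= sigma1 (rho a) by rewrite (le_trans nr) // /sigma1 lerDr classK_ge0.
have sc : 1 <= sigma1 (rho a) * n.+1%:R^-1 by rewrite ler_pdivlMr ?ltr0n ?mul1r.
apply: le_trans (V_le_sigma1 Da) _; rewrite mulrDl.
apply: ler_wpDl; first by rewrite mulr_ge0 ?sqrtr_ge0 ?ltW.
by rewrite expr2 -mulrA ler_peMr.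
Qed.

Lemma uniform_decay_classKL :
  exists beta, classKL beta /\ forall a, D a -> V a <= beta (rho a) (tau a).
Proof.
have [T HT] := choice V_le_alpha_height.
exists (fun r t => alpha r * decay T t); split=> [|a Da]; first exact: classKL_mul_decay.
have a0 := classK_ge0 classK_alpha (rho_ge0 a).
suff Vle m : tau a <= T m.+1 -> V a <= alpha (rho a) * decay T (tau a).
  apply: (Vle (Num.Def.archi_bound (tau a))); apply: le_trans (HT _).1.
  by apply: ltW; apply: lt_le_trans (archi_boundP (tau_ge0 Da)) _; rewrite ler_nat.
elim: m => [|m IHm] tauT.
  apply: le_trans (V_le_alpha Da) _; rewrite ler_peMr //.
  by have := decay_ge_height tauT; rewrite invr1.
have [|Ttau] := leP (tau a) (T m.+1); first exact: IHm.
apply: le_trans ((HT m.+1).2 a Da (ltW Ttau)) _.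
by rewrite ler_wpM2l // decay_ge_height.
Qed.

End UniformDecayKL.

Lemma classKL_eventually_le (R : realType) (beta : R -> R -> R) r e :
  classKL beta -> 0 < r -> 0 < e -> exists n : nat, forall t, n%:R <= t -> beta r t <= e.
Proof.
move=> [_ [_ KLdec]] r0 e0; have [decr /cvgrPdist_lt/(_ e e0)[M [_ HM]]] := KLdec r r0.
have M0 : 0 <= Num.max M 0 by rewrite le_max lexx orbT.
have Mn : M < (Num.Def.archi_bound (Num.max M 0))%:R.
  by apply: le_lt_trans (archi_boundP M0); rewrite le_max lexx.
exists (Num.Def.archi_bound (Num.max M 0)) => t nt.
have := HM _ Mn; rewrite sub0r normrN => /(le_lt_trans (ler_norm _))/ltW.
apply: le_trans; move: nt; rewrite le_eqVlt => /predU1P[<-//|nt].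
by rewrite ltW // decr // ler0n.
Qed.

Section Time.
Variables (R : realType) (k : timekind).
Implicit Types t s : time R k.

Lemma time_ge0 t : 0 <= sval t.
Proof. by case: t; case: k => t //= /natrP[n ->]; exact: ler0n. Qed.

Lemma timeset_nat (n : nat) : timeset k (n%:R : R).
Proof. by case: k => /=; [exact: natr_nat | exact: ler0n]. Qed.

Definition tnat (n : nat) : time R k := exist _ n%:R (timeset_nat n).

Lemma timeset_sub t s : sval t <= sval s -> timeset k (sval s - sval t).
Proof.
case: t s => [t tk] [s sk] /=; case: k tk sk => /= tk sk ts; last by rewrite subr_ge0.
move: tk sk ts => /natrP[m ->] /natrP[n ->]; rewrite ler_nat => mn.
by rewrite -natrB // natr_nat.
Qed.

Definition tsub t s (ts : sval t <= sval s) : time R k :=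
  exist _ (sval s - sval t) (timeset_sub ts).

Lemma tadd_tsub t s (ts : sval t <= sval s) : tadd t (tsub ts) = s.
Proof. by apply: val_inj; rewrite /= addrC subrK. Qed.

Lemma taddC t s : tadd t s = tadd s t.
Proof. by apply: val_inj; rewrite /= addrC. Qed.

Lemma tadd0 t : tadd t (tzero R k) = t.
Proof. by apply: val_inj; rewrite /= addr0. Qed.

End Time.

Section System.
Variables (R : realType) (k : timekind) (X : normedModType R)
  (U : lmodType R) (Y : normedModType R) (S : ctrl_sys k X U Y).

Lemma yout0 x u : Uset S u -> yout S (tzero R k) x u = h S x (u (tzero R k)).
Proof. by move=> Su; rewrite /yout phi_id. Qed.

Lemma yout_cocycle x u t s (ts : sval t <= sval s) : Uset S u ->
  yout S s x u = yout S (tsub ts) (phi S t x u) (fun r => u (tadd r t)).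
Proof.
move=> Su; rewrite /yout -[in LHS](tadd_tsub ts) phi_cocycle // taddC.
by congr (h S (phi S _ _ _) _); apply: funext => r; rewrite taddC.
Qed.

Lemma IOS_h_Kbounded : IOS S -> h_Kbounded S.
Proof.
move=> [beta [gamma [[_ [Kbeta _]] [[Kgamma _] yIOS]]]].
exists (fun r => beta r 0), gamma; split; first exact: Kbeta.
by split=> // x u Su; rewrite -yout0 //; exact: yIOS.
Qed.

Lemma IOS_OUAG : IOS S -> OUAG S.
Proof.
move=> [beta [gamma [KLbeta [Kgamma yIOS]]]]; exists gamma; split => // e r s e0 r0 _.
have [n beta_le] := classKL_eventually_le KLbeta r0 e0.
exists (@tnat R k n) => x u t xr Su _ nt; apply: le_trans (yIOS x u t Su) _.
rewrite lerD2r (le_trans _ (beta_le _ nt)) //.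
exact: (classK_le (g := beta^~ (sval t))) (KLbeta.2.1 _ (time_ge0 t)) _ (ltW xr).
Qed.

Lemma OUAG_OULIM : OUAG S -> OULIM S.
Proof.
move=> [gamma [Kgamma yOUAG]]; exists gamma; split => // e r s e0 r0 s0.
have [tau ytau] := yOUAG e r s e0 r0 s0.
by exists tau => x u xr Su us; exists tau; split; last exact: ytau.
Qed.

Section OutputLagrange.
Variables sigma gamma : R -> R.
Hypotheses (Ksigma : classK sigma) (Kgamma : classK gamma).
Hypothesis yOL : forall x u t, Uset S u ->
  `|yout S t x u| <= sigma `|yout S (tzero R k) x u| + gamma (unorm S u).

Lemma yout_OL_restart x u t s : Uset S u -> sval t <= sval s ->
  `|yout S s x u| <= sigma `|yout S t x u| + gamma (unorm S u).
Proof.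
move=> Su ts; have [Sv vu] := Uset_shift t Su.
rewrite (yout_cocycle x ts Su); apply: le_trans (yOL (phi S t x u) (tsub ts) Sv) _.
by rewrite yout0 // taddC tadd0 lerD2l classK_le ?unorm_ge0.
Qed.

Lemma yout_bound_of_h_Kbounded : h_Kbounded S -> exists psi gamma0,
  [/\ classK psi, classK gamma0 & forall x u t, Uset S u ->
      `|yout S t x u| <= psi `|x| + gamma0 (unorm S u)].
Proof.
move=> [sigma1 [gamma1 [Ksigma1 [Kgamma1 hle]]]].
have two : (0 : R) < 2 by [].
exists (fun r => sigma (2 * sigma1 r)), (fun s => sigma (2 * gamma1 s) + gamma s).
split=> [||x u t Su]; first exact: classK_comp Ksigma (classK_scale two Ksigma1).
  exact: classK_add (classK_comp Ksigma (classK_scale two Kgamma1)) Kgamma.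
apply: le_trans (yOL x t Su) _; rewrite addrA lerD2r yout0 //.
apply: le_trans (classK_le Ksigma (normr_ge0 _) (hle x _ Su)) _.
by apply: classK_add_le; rewrite ?classK_ge0 ?unorm_ge0.
Qed.

Lemma OULIM_OUAG : classKinf gamma -> OULIM S -> OUAG S.
Proof.
move=> Kinfgamma [gammaL [[KgammaL _] yOULIM]].
have two : (0 : R) < 2 by [].
exists (fun s => sigma (2 * gammaL s) + gamma s); split.
  exact: classKinf_add (classK_comp Ksigma (classK_scale two KgammaL)) Kinfgamma.
move=> e r s e0 r0 s0.
have [d d0 sigma2d] := classK_small (classK_comp Ksigma (classK_scale two (@classK_id R))) e0.
have [tau ytau] := yOULIM d r s d0 r0 s0.
exists tau => x u t xr Su us taut; have [t0 [t0tau yt0]] := ytau x u xr Su us.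
apply: le_trans (yout_OL_restart x Su (le_trans t0tau taut)) _.
rewrite addrA lerD2r (le_trans (classK_le Ksigma (normr_ge0 _) yt0)) //.
apply: le_trans (classK_add_le Ksigma (ltW d0) _) _; first by rewrite classK_ge0 ?unorm_ge0.
by rewrite lerD2r.
Qed.

End OutputLagrange.

Lemma OUAG_bounded_IOS psi gamma0 : classK psi -> classK gamma0 ->
  (forall x u t, Uset S u -> `|yout S t x u| <= psi `|x| + gamma0 (unorm S u)) ->
  OUAG S -> IOS S.
Proof.
move=> Kpsi Kgamma0 ybound [gammaA [[KgammaA _] yOUAG]].
pose g s := gamma0 s + gammaA s + s.
have Kinfg : classKinf g := classKinf_add (classK_add Kgamma0 KgammaA) (@classKinf_id R).
pose D (a : X * (time R k -> U) * time R k) := Uset S a.1.2.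
pose V a := `|yout S a.2 a.1.1 a.1.2| - g (unorm S a.1.2).
have u0 u : Uset S u -> [/\ 0 <= unorm S u, 0 <= gamma0 (unorm S u)
    & 0 <= gammaA (unorm S u)].
  by move=> Su; rewrite !classK_ge0 ?unorm_ge0.
have [||||beta [KLbeta Vbeta]] := @uniform_decay_classKL R _ D V
  (fun a => `|a.1.1|) (fun a => sval a.2) psi Kpsi.
- by [].
- by move=> a _; exact: time_ge0.
- move=> [[x u] t] /= Su; have [? ? ?] := u0 u Su.
  by have := ybound x u t Su; rewrite /V /g /=; lra.
- (* The summand [s] of [g] makes V nonpositive for inputs of norm >= psi r + 1,
     so OUAG is only needed for bounded inputs. *)
  move=> e r e0 r0; have s0 : 0 < psi r + 1 by rewrite ltr_wpDl ?classK_ge0 ?ltW.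
  have [tau ytau] := yOUAG e r _ e0 r0 s0; exists (sval tau) => -[[x u] t] /= Su xr taut.
  have [? ? ?] := u0 u Su; rewrite /V /g /=.
  have [us|su] := ltP (unorm S u) (psi r + 1).
    by have := ytau x u t xr Su us taut; lra.
  have := classK_le Kpsi (normr_ge0 x) (ltW xr).
  by have := ybound x u t Su; lra.
exists beta, g; do 2!split => //; move=> x u t Su.
by rewrite -lerBlDr; exact: (Vbeta (x, u, t)).
Qed.

Lemma OL_OULIM_OUAG : OL S -> OULIM S -> OUAG S.
Proof.
move=> [sigma [gamma [[Ksigma _] [Kgamma yOL]]]].
exact: (OULIM_OUAG Ksigma Kgamma.1 yOL Kgamma).
Qed.

Lemma OUAG_OL_h_Kbounded_IOS : OUAG S -> OL S -> h_Kbounded S -> IOS S.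
Proof.
move=> yOUAG [sigma [gamma [[Ksigma _] [[Kgamma _] yOL]]]].
move=> /(yout_bound_of_h_Kbounded Ksigma Kgamma yOL)[psi [gamma0 [Kpsi Kgamma0 ybound]]].
exact: OUAG_bounded_IOS ybound yOUAG.
Qed.

End System.

Theorem proposition2 (R : realType) (k : timekind) (X : normedModType R)
    (U : lmodType R) (Y : normedModType R) (S : ctrl_sys k X U Y) :
  [/\ (IOS S /\ OL S) <-> (OUAG S /\ OL S /\ h_Kbounded S),
      (OUAG S /\ OL S /\ h_Kbounded S) <-> (OULIM S /\ OL S /\ h_Kbounded S)
    & (IOS S /\ OL S) <-> (OULIM S /\ OL S /\ h_Kbounded S)].
Proof.
have ios_to_ouag : IOS S /\ OL S -> OUAG S /\ OL S /\ h_Kbounded S.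
  by move=> [yIOS yOL]; split; [exact: IOS_OUAG | split; last exact: IOS_h_Kbounded].
have ouag_to_oulim : OUAG S /\ OL S /\ h_Kbounded S -> OULIM S /\ OL S /\ h_Kbounded S.
  by move=> [yOUAG yOLh]; split; first exact: OUAG_OULIM.
have oulim_to_ios : OULIM S /\ OL S /\ h_Kbounded S -> IOS S /\ OL S.
  move=> [yOULIM [yOL hK]]; split => //.
  exact: OUAG_OL_h_Kbounded_IOS (OL_OULIM_OUAG yOL yOULIM) yOL hK.
by split; split; tauto.
Qed.
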